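(* Let $n\ge3$, let $\Phi,\Phi':\mathfrak{B}([n])^{op}\to\mathbf{Gpd}$ be functors and $\theta:\Phi\to\Phi'$ a natural transformation such that $\theta_S:\Phi(S)\to\Phi'(S)$ is an equivalence of categories for every $S\subseteq[n]$ with $n-3\le|S|\le n-1$. Then the induced functor $\operatorname{2lim}_{\mathfrak{B}([n])}\Phi\to\operatorname{2lim}_{\mathfrak{B}([n])}\Phi'$ is an equivalence of categories.
   Context: $[n]=\{1,\dots,n\}$; $\mathfrak{B}([n])$ is the poset of proper subsets of $[n]$ ordered by inclusion. For a functor $\Psi:I^{op}\to\mathbf{Gpd}$ on a poset, $\operatorname{2lim}\Psi$ is the groupoid whose objects are families $(a_U,\alpha_{U,V})$ with $a_U\in\Psi(U)$ and isomorphisms $\alpha_{U,V}:\Psi_{U,V}(a_V)\to a_U$ for $U\le V$ (where $\Psi_{U,V}:\Psi(V)\to\Psi(U)$) satisfying $\alpha_{U,U}=\mathrm{id}$ and $\alpha_{U,W}=\alpha_{U,V}\circ\Psi_{U,V}(\alpha_{V,W})$, and whose morphisms are families $g_U:a_U\to b_U$ with $g_U\circ\alpha_{U,V}=\beta_{U,V}\circ\Psi_{U,V}(g_V)$. The induced functor sends $(a_U,\alpha_{U,V})$ to $(\theta_U(a_U),\theta_U(\alpha_{U,V}))$. *)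

From Stdlib Require Import ProofIrrelevance FunctionalExtensionality.
From HB Require Import structures.
From mathcomp Require Import all_boot.
Set Implicit Arguments. Unset Strict Implicit. Unset Printing Implicit Defensive.

Record Category := Cat {
  cobj :> Type;
  hom : cobj -> cobj -> Type;
  idm : forall x, hom x x;
  cmp : forall x y z, hom y z -> hom x y -> hom x z;
  cmp_idl : forall x y (f : hom x y), cmp (idm y) f = f;
  cmp_idr : forall x y (f : hom x y), cmp f (idm x) = f;
  cmp_assoc : forall x y z w (h : hom z w) (g : hom y z) (f : hom x y),
      cmp h (cmp g f) = cmp (cmp h g) f }.
Arguments hom {c} x y.
Arguments idm {c} x.
Arguments cmp {c x y z} g f.

Definition is_iso (C : Category) (x y : C) (f : hom x y) : Prop :=
  exists g : hom y x, cmp g f = idm x /\ cmp f g = idm y.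

Record Groupoid := Gpd {
  gcat :> Category;
  gpd_iso : forall (x y : gcat) (f : hom x y), is_iso f }.

Record CFunctor (C D : Category) := CFun {
  fobj :> C -> D;
  fmap : forall x y : C, hom x y -> hom (fobj x) (fobj y);
  fmap_id : forall x, fmap (idm x) = idm (fobj x);
  fmap_comp : forall x y z (g : hom y z) (f : hom x y),
      fmap (cmp g f) = cmp (fmap g) (fmap f) }.
Arguments fmap {C D} _ {x y} _.

Definition IsEquivalence (C D : Category) (F : CFunctor C D) : Prop :=
  exists G : CFunctor D C,
    (exists eta : forall x : C, hom x (G (F x)),
        (forall (x x' : C) (f : hom x x'),
            cmp (fmap G (fmap F f)) (eta x) = cmp (eta x') f)
        /\ forall x, is_iso (eta x))
    /\
    (exists eps : forall y : D, hom (F (G y)) y,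
        (forall (y y' : D) (g : hom y y'),
            cmp g (eps y) = cmp (eps y') (fmap F (fmap G g)))
        /\ forall y, is_iso (eps y)).

Definition eq_hom (C : Category) (x y : C) (e : x = y) : hom x y :=
  match e in _ = y' return hom x y' with erefl => idm x end.

Definition Bn (n : nat) := {U : {set 'I_n} | U \proper setT}.

(** For U <= V we have
    dres h : dobj V -> dobj U; strict functoriality is the equality of
    functors Psi_{U,U} = Id and Psi_{U,W} = Psi_{U,V} o Psi_{V,W}
    (equality of objects, and of morphisms up to the induced transport). *)
Record Diagram (n : nat) := Diag {
  dobj : Bn n -> Groupoid;
  dres : forall U V : Bn n, val U \subset val V -> CFunctor (dobj V) (dobj U);
  dres_id_obj : forall (U : Bn n) (h : val U \subset val U) (x : dobj U), dres h x = x;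
  dres_id_hom : forall (U : Bn n) (h : val U \subset val U) (x y : dobj U) (f : hom x y),
      cmp (eq_hom (dres_id_obj h y)) (fmap (dres h) f)
      = cmp f (eq_hom (dres_id_obj h x));
  dres_comp_obj : forall (U V W : Bn n) (hUV : val U \subset val V)
      (hVW : val V \subset val W) (hUW : val U \subset val W) (x : dobj W),
      dres hUW x = dres hUV (dres hVW x);
  dres_comp_hom : forall (U V W : Bn n) (hUV : val U \subset val V)
      (hVW : val V \subset val W) (hUW : val U \subset val W)
      (x y : dobj W) (f : hom x y),
      cmp (eq_hom (dres_comp_obj hUV hVW hUW y)) (fmap (dres hUW) f)
      = cmp (fmap (dres hUV) (fmap (dres hVW) f))
            (eq_hom (dres_comp_obj hUV hVW hUW x)) }.
Arguments dres {n} _ {U V} _.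
Arguments dres_id_obj {n} _ {U} _ _.
Arguments dres_comp_obj {n} _ {U V W} _ _ _ _.

Record Trans (n : nat) (P Q : Diagram n) := Tr {
  tcomp : forall U, CFunctor (dobj P U) (dobj Q U);
  tnat_obj : forall (U V : Bn n) (h : val U \subset val V) (x : dobj P V),
      tcomp U (dres P h x) = dres Q h (tcomp V x);
  tnat_hom : forall (U V : Bn n) (h : val U \subset val V) (x y : dobj P V)
      (f : hom x y),
      cmp (eq_hom (tnat_obj h y)) (fmap (tcomp U) (fmap (dres P h) f))
      = cmp (fmap (dres Q h) (fmap (tcomp V) f)) (eq_hom (tnat_obj h x)) }.
Arguments tcomp {n P Q} _ _.
Arguments tnat_obj {n P Q} _ {U V} _ _.

Record LimObj (n : nat) (P : Diagram n) := LObj {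
  la : forall U, dobj P U;
  lalpha : forall (U V : Bn n) (h : val U \subset val V),
      hom (dres P h (la V)) (la U);
  lalpha_id : forall (U : Bn n) (h : val U \subset val U),
      lalpha h = eq_hom (dres_id_obj P h (la U));
  lalpha_comp : forall (U V W : Bn n) (hUV : val U \subset val V)
      (hVW : val V \subset val W) (hUW : val U \subset val W),
      lalpha hUW = cmp (lalpha hUV)
                       (cmp (fmap (dres P hUV) (lalpha hVW))
                            (eq_hom (dres_comp_obj P hUV hVW hUW (la W)))) }.
Arguments la {n P} _ _.
Arguments lalpha {n P} _ {U V} _.

Record LimHom (n : nat) (P : Diagram n) (a b : LimObj P) := LHom {
  lg : forall U, hom (la a U) (la b U);
  lg_nat : forall (U V : Bn n) (h : val U \subset val V),
      cmp (lg U) (lalpha a h) = cmp (lalpha b h) (fmap (dres P h) (lg V)) }.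
Arguments lg {n P a b} _ _.

Lemma LimHom_ext n (P : Diagram n) (a b : LimObj P) (f g : LimHom a b) :
  (forall U, lg f U = lg g U) -> f = g.
Proof.
case: f => f fn; case: g => g gn /= H.
have E : f = g by apply: functional_extensionality_dep.
subst g; f_equal; apply: proof_irrelevance.
Qed.

Section Lim.
Variables (n : nat) (P : Diagram n).

Definition lim_id (a : LimObj P) : LimHom a a.
Proof.
refine (@LHom n P a a (fun U => idm _) _) => U V h.
by rewrite fmap_id cmp_idl cmp_idr.
Defined.

Definition lim_cmp (a b c : LimObj P) (g : LimHom b c) (f : LimHom a b) :
  LimHom a c.
Proof.
refine (@LHom n P a c (fun U => cmp (lg g U) (lg f U)) _) => U V h.
by rewrite -cmp_assoc lg_nat cmp_assoc lg_nat -cmp_assoc fmap_comp.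
Defined.

Definition LimCat : Category.
Proof.
refine (@Cat (LimObj P) (@LimHom n P) lim_id lim_cmp _ _ _).
- by move=> x y f; apply: LimHom_ext => U /=; rewrite cmp_idl.
- by move=> x y f; apply: LimHom_ext => U /=; rewrite cmp_idr.
- by move=> x y z w h g f; apply: LimHom_ext => U /=; rewrite cmp_assoc.
Defined.
End Lim.

Lemma eq_hom_trans (C : Category) (x y z : C) (e1 : x = y) (e2 : y = z) :
  cmp (eq_hom e2) (eq_hom e1) = eq_hom (etrans e1 e2).
Proof. destruct e2, e1; simpl; by rewrite cmp_idl. Qed.

Lemma eq_hom_fmap (C D : Category) (F : CFunctor C D) (x y : C) (e : x = y) :
  fmap F (eq_hom e) = eq_hom (f_equal F e).
Proof. destruct e; simpl; by rewrite fmap_id. Qed.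

Lemma eq_hom_pi (C : Category) (x y : C) (e1 e2 : x = y) :
  eq_hom e1 = eq_hom e2.
Proof. by rewrite (proof_irrelevance _ e1 e2). Qed.

Lemma eq_hom_flip (C : Category) (a b c d : C) (e1 : a = b) (e2 : c = d)
      (g : hom a c) (k : hom b d) :
  cmp (eq_hom e2) g = cmp k (eq_hom e1) ->
  cmp (eq_hom (esym e2)) k = cmp g (eq_hom (esym e1)).
Proof.
destruct e2, e1; simpl; rewrite cmp_idl cmp_idr => ->.
by rewrite cmp_idl cmp_idr.
Qed.

Lemma cmp_assoc_r (C : Category) (x y z w v : C) (h : hom z w) (g : hom y z)
      (f : hom x y) (k : hom v x) :
  cmp h (cmp g (cmp f k)) = cmp (cmp h (cmp g f)) k.
Proof. by rewrite !cmp_assoc. Qed.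

Section Induced.
Variables (n : nat) (P Q : Diagram n) (t : Trans P Q).

Lemma tnat_hom' (U V : Bn n) (h : val U \subset val V) (x y : dobj P V)
      (f : hom x y) :
  cmp (eq_hom (esym (tnat_obj t h y))) (fmap (dres Q h) (fmap (tcomp t V) f))
  = cmp (fmap (tcomp t U) (fmap (dres P h) f)) (eq_hom (esym (tnat_obj t h x))).
Proof. by apply: eq_hom_flip; apply: tnat_hom. Qed.

Definition lim_map_obj (a : LimObj P) : LimObj Q.
Proof.
refine (@LObj n Q (fun U => tcomp t U (la a U))
  (fun U V h => cmp (fmap (tcomp t U) (lalpha a h))
                    (eq_hom (esym (tnat_obj t h (la a V))))) _ _).
- move=> U h; rewrite lalpha_id eq_hom_fmap eq_hom_trans; exact: eq_hom_pi.
- move=> U V W hUV hVW hUW.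
  rewrite (lalpha_comp a hUV hVW hUW) !fmap_comp.
  rewrite -!cmp_assoc; congr (cmp _ _).
  rewrite [RHS]cmp_assoc tnat_hom' -!cmp_assoc; congr (cmp _ _).
  by rewrite !eq_hom_fmap !eq_hom_trans; apply: eq_hom_pi.
Defined.

Definition lim_map_hom (a b : LimObj P) (g : LimHom a b) :
  LimHom (lim_map_obj a) (lim_map_obj b).
Proof.
refine (@LHom n Q (lim_map_obj a) (lim_map_obj b)
          (fun U => fmap (tcomp t U) (lg g U)) _) => U V h /=.
rewrite cmp_assoc -fmap_comp lg_nat fmap_comp -!cmp_assoc.
by rewrite tnat_hom'.
Defined.

Definition lim_functor : CFunctor (LimCat P) (LimCat Q).
Proof.
refine (@CFun (LimCat P) (LimCat Q) lim_map_obj lim_map_hom _ _).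
- by move=> x; apply: LimHom_ext => U /=; rewrite fmap_id.
- by move=> x y z g f; apply: LimHom_ext => U /=; rewrite fmap_comp.
Defined.
End Induced.
Arguments lim_functor {n P Q} t.

From Stdlib Require Import ProofIrrelevance ClassicalEpsilon.
From HB Require Import structures.
From mathcomp Require Import all_boot zify.
Set Implicit Arguments. Unset Strict Implicit. Unset Printing Implicit Defensive.

(** Only the sets [n] \ {i,j,k} ("co-triples", with
    repetitions allowed) are used.  We prove that the induced functor is
    faithful, full and essentially surjective, which suffices (ffe_equiv):
    - a morphism g of the 2-limit is a groupoid morphism, so its component at
      U is determined by its component at any larger set; taking a maximal set
      [n] \ {m} with m outside U, faithfulness of theta there gives faithfulness;
    - fullness: the components of h : theta(a) -> theta(b) at the maximal sets
      [n] \ {i} lift uniquely; the restrictions of these lifts to U agree for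
      all i outside U, being compared on [n] \ {i,j}, and they are natural;
    - essential surjectivity is descent: choose x_i over [n] \ {i} with
      theta(x_i) isomorphic to b; the transition isomorphisms between x_i and
      x_j lift over [n] \ {i,j}; they satisfy the cocycle identity over
      [n] \ {i,j,k} by faithfulness, hence over every U avoiding i, j, k, and
      the x_i glue to a preimage of b.
    The strict functoriality equations of the diagrams make components live
    over propositionally (not definitionally) equal objects; a heterogeneous
    equality of morphisms, heq, takes care of the resulting transports. *)

Section Heq.
Variable C : Category.

Definition heq (a b a' b' : C) (f : hom a b) (f' : hom a' b') : Prop :=
  exists (e1 : a = a') (e2 : b = b'), cmp (eq_hom e2) f = cmp f' (eq_hom e1).

Lemma eq_hom_refl (x : C) (e : x = x) : eq_hom e = idm x.
Proof. by rewrite (eq_hom_pi e erefl). Qed.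

Lemma heq_refl (a b : C) (f : hom a b) : heq f f.
Proof. by exists erefl, erefl; rewrite /= cmp_idl cmp_idr. Qed.

Lemma heq_eq (a b : C) (f f' : hom a b) : heq f f' -> f = f'.
Proof. by move=> [e1 [e2]]; rewrite !eq_hom_refl cmp_idl cmp_idr. Qed.

Lemma heq_sym (a b a' b' : C) (f : hom a b) (f' : hom a' b') :
  heq f f' -> heq f' f.
Proof.
move=> [e1 [e2 E]]; subst; exists erefl, erefl; move: E.
by rewrite /= !cmp_idl !cmp_idr.
Qed.

Lemma heq_trans (a b a' b' a'' b'' : C) (f : hom a b) (f' : hom a' b')
    (f'' : hom a'' b'') :
  heq f f' -> heq f' f'' -> heq f f''.
Proof.
move=> [e1 [e2 E]] [e3 [e4 E']]; subst; exists erefl, erefl; move: E E'.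
by rewrite /= !cmp_idl !cmp_idr => -> ->.
Qed.

Lemma heq_cmp (a b c a' b' c' : C) (f : hom a b) (f' : hom a' b')
    (g : hom b c) (g' : hom b' c') :
  heq f f' -> heq g g' -> heq (cmp g f) (cmp g' f').
Proof.
move=> [e1 [e2 E]] [e3 [e4 E']]; subst; move: E E'.
rewrite !eq_hom_refl /= !cmp_idl !cmp_idr => -> ->; exact: heq_refl.
Qed.

Lemma heq_eq_hom (x y : C) (e : x = y) : heq (eq_hom e) (idm y).
Proof. by subst; exact: heq_refl. Qed.

Lemma heq_cmp_eql (a b b' : C) (e : b = b') (f : hom a b) :
  heq (cmp (eq_hom e) f) f.
Proof. by subst; rewrite /= cmp_idl; exact: heq_refl. Qed.

Lemma heq_cmp_eqr (a a' b : C) (e : a' = a) (f : hom a b) :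
  heq (cmp f (eq_hom e)) f.
Proof. by subst; rewrite /= cmp_idr; exact: heq_refl. Qed.
End Heq.

Lemma heq_fmap (C D : Category) (F : CFunctor C D) (a b a' b' : C)
    (f : hom a b) (f' : hom a' b') :
  heq f f' -> heq (fmap F f) (fmap F f').
Proof.
move=> [e1 [e2 E]]; subst; move: E; rewrite /= cmp_idl cmp_idr => ->.
exact: heq_refl.
Qed.

Section Inverse.
Variable G : Groupoid.

Definition ginv (x y : G) (f : hom x y) : hom y x :=
  proj1_sig (constructive_indefinite_description _ (gpd_iso f)).

Lemma inv_l (x y : G) (f : hom x y) : cmp (ginv f) f = idm x.
Proof. by rewrite /ginv; case: constructive_indefinite_description => g []. Qed.

Lemma inv_r (x y : G) (f : hom x y) : cmp f (ginv f) = idm y.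
Proof. by rewrite /ginv; case: constructive_indefinite_description => g []. Qed.

Lemma inv_uniq (x y : G) (f : hom x y) (g : hom y x) :
  cmp g f = idm x -> g = ginv f.
Proof. by move=> H; rewrite -[g]cmp_idr -(inv_r f) cmp_assoc H cmp_idl. Qed.

Lemma inv_cmp (x y z : G) (f : hom x y) (g : hom y z) :
  ginv (cmp g f) = cmp (ginv f) (ginv g).
Proof.
symmetry; apply: inv_uniq.
by rewrite -cmp_assoc (cmp_assoc (ginv g)) inv_l cmp_idl inv_l.
Qed.

Lemma inv_inv (x y : G) (f : hom x y) : ginv (ginv f) = f.
Proof. by symmetry; apply: inv_uniq; rewrite inv_r. Qed.

Lemma cmp_inv_K (x y z : G) (f : hom x y) (g : hom z y) :
  cmp f (cmp (ginv f) g) = g.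
Proof. by rewrite cmp_assoc inv_r cmp_idl. Qed.

Lemma cmp_K_inv (x y z : G) (f : hom x y) (g : hom z x) :
  cmp (ginv f) (cmp f g) = g.
Proof. by rewrite cmp_assoc inv_l cmp_idl. Qed.

Lemma inv_swap (a b c d : G) (f : hom b d) (x : hom a b) (y : hom c d)
    (g : hom a c) :
  cmp f x = cmp y g -> cmp (ginv f) y = cmp x (ginv g).
Proof.
move=> H; rewrite -[y]cmp_idr -(inv_r g) (cmp_assoc y g) -H -(cmp_assoc f x).
by rewrite (cmp_assoc (ginv f) f) inv_l cmp_idl.
Qed.

Lemma heq_inv (a b a' b' : G) (f : hom a b) (f' : hom a' b') :
  heq f f' -> heq (ginv f) (ginv f').
Proof.
move=> [e1 [e2 E]]; subst; move: E; rewrite /= cmp_idl cmp_idr => ->.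
exact: heq_refl.
Qed.
End Inverse.

Lemma inv_fmap (G H : Groupoid) (F : CFunctor G H) (x y : G) (f : hom x y) :
  ginv (fmap F f) = fmap F (ginv f).
Proof. by symmetry; apply: inv_uniq; rewrite -fmap_comp inv_l fmap_id. Qed.

Section Equivalence.
Variables (C D : Category) (F : CFunctor C D).

Lemma equiv_faithful : IsEquivalence F ->
  forall (x y : C) (f g : hom x y), fmap F f = fmap F g -> f = g.
Proof.
move=> [G [[eta [Heta eta_iso]] _]] x y f g E.
have H := Heta _ _ f; rewrite E Heta in H.
case: (eta_iso y) => k [Hk _].
by rewrite -(cmp_idl f) -Hk -cmp_assoc -H cmp_assoc Hk cmp_idl.
Qed.

Lemma equiv_full : IsEquivalence F ->
  forall (x y : C) (h : hom (F x) (F y)), exists f : hom x y, fmap F f = h.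
Proof.
move=> [G [[eta [Heta eta_iso]] [eps [Heps eps_iso]]]] x y h.
have G_faithful (a b : D) (g g' : hom a b) : fmap G g = fmap G g' -> g = g'.
  move=> E; have H := Heps _ _ g; rewrite E -Heps in H.
  case: (eps_iso a) => k [_ Hk].
  by rewrite -(cmp_idr g) -Hk cmp_assoc H -cmp_assoc Hk cmp_idr.
case: (eta_iso y) => k [_ Hk]; case: (eta_iso x) => l [_ Hl].
exists (cmp k (cmp (fmap G h) (eta x))); apply: G_faithful.
rewrite -[LHS]cmp_idr -Hl cmp_assoc Heta.
by rewrite (cmp_assoc (eta y) k) Hk cmp_idl -cmp_assoc Hl cmp_idr.
Qed.

Lemma equiv_ess_surj : IsEquivalence F ->
  forall y : D, exists (x : C) (e : hom (F x) y), is_iso e.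
Proof. by move=> [G [_ [eps [_ eps_iso]]]] y; exists (G y), (eps y). Qed.

Lemma ffe_equiv
  (F_faithful : forall (x y : C) (f g : hom x y), fmap F f = fmap F g -> f = g)
  (F_full : forall (x y : C) (h : hom (F x) (F y)), exists f : hom x y, fmap F f = h)
  (F_ess_surj : forall y : D, exists (x : C) (e : hom (F x) y), is_iso e) :
  IsEquivalence F.
Proof.
pose lift x y (h : hom (F x) (F y)) :=
  proj1_sig (constructive_indefinite_description _ (F_full x y h)).
have liftE x y h : fmap F (@lift x y h) = h.
  by rewrite /lift; case: constructive_indefinite_description.
pose Gobj y := proj1_sig (constructive_indefinite_description _ (F_ess_surj y)).
have Gobj_iso y : exists e : hom (F (Gobj y)) y, is_iso e.
  by rewrite /Gobj; case: constructive_indefinite_description.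
pose eps y := proj1_sig (constructive_indefinite_description _ (Gobj_iso y)).
have eps_iso y : is_iso (eps y).
  by rewrite /eps; case: constructive_indefinite_description.
pose eps' y := proj1_sig (constructive_indefinite_description _ (eps_iso y)).
have eps'K y : cmp (eps' y) (eps y) = idm _ /\ cmp (eps y) (eps' y) = idm _.
  by rewrite /eps'; case: constructive_indefinite_description.
pose Gmap y y' (g : hom y y') := lift _ _ (cmp (eps' y') (cmp g (eps y))).
have GmapE y y' g : fmap F (@Gmap y y' g) = cmp (eps' y') (cmp g (eps y)).
  exact: liftE.
have Gmap_id y : Gmap y y (idm y) = idm (Gobj y).
  by apply: F_faithful; rewrite GmapE fmap_id cmp_idl; case: (eps'K y).
have Gmap_comp y y' y'' (g : hom y' y'') (f : hom y y') :
    Gmap _ _ (cmp g f) = cmp (Gmap _ _ g) (Gmap _ _ f).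
  apply: F_faithful; rewrite fmap_comp !GmapE.
  by rewrite -!cmp_assoc (cmp_assoc (eps y')); case: (eps'K y') => _ ->; rewrite cmp_idl.
exists (CFun Gmap_id Gmap_comp); split.
- exists (fun x => lift x (Gobj (F x)) (eps' (F x))); split.
  + move=> x x' f /=; apply: F_faithful; rewrite !fmap_comp GmapE !liftE.
    by rewrite -!cmp_assoc; case: (eps'K (F x)) => _ ->; rewrite cmp_idr.
  + move=> x; exists (lift _ _ (eps (F x))).
    by case: (eps'K (F x)) => H1 H2; split; apply: F_faithful;
      rewrite fmap_comp !liftE fmap_id.
- exists eps; split => // y y' g /=.
  by rewrite GmapE !cmp_assoc; case: (eps'K y') => _ ->; rewrite cmp_idl.
Qed.
End Equivalence.

Lemma lim_iso n (P : Diagram n) (a b : LimObj P) (f : LimHom a b) :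
  @is_iso (LimCat P) a b f.
Proof.
have ginv_nat (U V : Bn n) (h : val U \subset val V) :
    cmp (ginv (lg f U)) (lalpha b h)
    = cmp (lalpha a h) (fmap (dres P h) (ginv (lg f V))).
  by rewrite -inv_fmap; apply: inv_swap; exact: lg_nat.
exists (LHom ginv_nat); split; apply: LimHom_ext => U /=; [exact: inv_l|exact: inv_r].
Qed.

Section Coherence.
Variables (n : nat) (P Q : Diagram n) (t : Trans P Q).

Lemma heq_dres_comp (U V W : Bn n) (hUV : val U \subset val V)
    (hVW : val V \subset val W) (hUW : val U \subset val W) (x y : dobj P W)
    (f : hom x y) :
  heq (fmap (dres P hUW) f) (fmap (dres P hUV) (fmap (dres P hVW) f)).
Proof. by eexists; eexists; exact: dres_comp_hom. Qed.

Lemma heq_tnat (U V : Bn n) (h : val U \subset val V) (x y : dobj P V)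
    (f : hom x y) :
  heq (fmap (tcomp t U) (fmap (dres P h) f))
      (fmap (dres Q h) (fmap (tcomp t V) f)).
Proof. by eexists; eexists; exact: tnat_hom. Qed.

Lemma heq_lalpha_comp (a : LimObj P) (U V W : Bn n) (hUV : val U \subset val V)
    (hVW : val V \subset val W) (hUW : val U \subset val W) :
  heq (lalpha a hUW) (cmp (lalpha a hUV) (fmap (dres P hUV) (lalpha a hVW))).
Proof.
rewrite (lalpha_comp a hUV hVW hUW).
by apply: heq_cmp; [exact: heq_cmp_eqr|exact: heq_refl].
Qed.

Lemma heq_lalpha_map (a : LimObj P) (U V : Bn n) (h : val U \subset val V) :
  heq (lalpha (lim_map_obj t a) h) (fmap (tcomp t U) (lalpha a h)).
Proof. exact: heq_cmp_eqr. Qed.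
End Coherence.

Section CoTriples.
Variable n : nat.

Definition miss (i j k : 'I_n) : {set 'I_n} := ~: [set i; j; k].

Lemma miss_proper (i j k : 'I_n) : miss i j k \proper setT.
Proof.
rewrite properE subsetT /=; apply/subsetPn; exists i => //.
by rewrite !inE eqxx.
Qed.

Definition Miss (i j k : 'I_n) : Bn n := exist _ (miss i j k) (miss_proper i j k).

Lemma sub_miss (X : {set 'I_n}) (i j k : 'I_n) :
  i \notin X -> j \notin X -> k \notin X -> X \subset miss i j k.
Proof.
move=> Hi Hj Hk; apply/subsetP => x Hx; rewrite !inE.
by apply/negP; case/orP => [/orP []|] /eqP E; subst;
  [move: Hi|move: Hj|move: Hk]; rewrite Hx.
Qed.

Lemma notin_miss1 (i j k : 'I_n) : i \notin miss i j k.
Proof. by rewrite !inE eqxx. Qed.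
Lemma notin_miss2 (i j k : 'I_n) : j \notin miss i j k.
Proof. by rewrite !inE eqxx !orbT. Qed.
Lemma notin_miss3 (i j k : 'I_n) : k \notin miss i j k.
Proof. by rewrite !inE eqxx !orbT. Qed.

Lemma card_miss (i j k : 'I_n) : n - 3 <= #|val (Miss i j k)| <= n - 1.
Proof.
rewrite /= /miss; have := cardsC [set i; j; k]; rewrite card_ord.
have H1 : 0 < #|[set i; j; k]| by apply/card_gt0P; exists i; rewrite !inE eqxx.
have H3 : #|[set i; j; k]| <= 3.
  by rewrite cardsU cards2 cards1; case: (i != j) => /=; lia.
move: H1 H3; move: #|[set i; j; k]| #|~: [set i; j; k]| => a b *.
by apply/andP; split; lia.
Qed.
End CoTriples.

(** In the rest of the development theta is assumed to be an equivalence on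
    every co-triple; [n] \ {i} and [n] \ {i,j} are the co-triples with
    repetitions. *)
Section Main.
Variables (n : nat) (i0 : 'I_n) (P Q : Diagram n) (t : Trans P Q).
Hypothesis theta_equiv : forall i j k : 'I_n, IsEquivalence (tcomp t (Miss i j k)).

Notation Miss1 i := (Miss i i i).
Notation Miss2 i j := (Miss i j j).

Lemma theta_faithful (i j k : 'I_n) (x y : dobj P (Miss i j k)) (f g : hom x y) :
  fmap (tcomp t (Miss i j k)) f = fmap (tcomp t (Miss i j k)) g -> f = g.
Proof. exact: equiv_faithful (theta_equiv i j k) x y f g. Qed.

Definition theta_lift (i j k : 'I_n) (x y : dobj P (Miss i j k))
    (h : hom (tcomp t _ x) (tcomp t _ y)) : hom x y :=
  proj1_sig (constructive_indefinite_description _ (equiv_full (theta_equiv i j k) h)).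

Lemma theta_liftE (i j k : 'I_n) (x y : dobj P (Miss i j k))
    (h : hom (tcomp t _ x) (tcomp t _ y)) :
  fmap (tcomp t (Miss i j k)) (theta_lift h) = h.
Proof. by rewrite /theta_lift; case: constructive_indefinite_description. Qed.

Definition outside (U : Bn n) : 'I_n := odflt i0 [pick i | i \notin val U].

Lemma outside_notin (U : Bn n) : outside U \notin val U.
Proof.
rewrite /outside; case: pickP => [x Hx|H] //=; exfalso.
case: U H => U /= HU H; move: HU; rewrite properE => /andP [_ /subsetPn [x _ Hx]].
by move: (H x); rewrite /= Hx.
Qed.

Definition sub_outside (U : Bn n) : val U \subset val (Miss1 (outside U)) :=
  sub_miss (outside_notin U) (outside_notin U) (outside_notin U).

Lemma outside_notin_sub (U X : Bn n) (h : val U \subset val X) :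
  outside X \notin val U.
Proof. exact: contra (subsetP h _) (outside_notin X). Qed.

Definition miss2_sub_l (i j : 'I_n) : val (Miss2 i j) \subset val (Miss1 i) :=
  sub_miss (notin_miss1 i j j) (notin_miss1 i j j) (notin_miss1 i j j).
Definition miss2_sub_r (i j : 'I_n) : val (Miss2 i j) \subset val (Miss1 j) :=
  sub_miss (notin_miss2 i j j) (notin_miss2 i j j) (notin_miss2 i j j).

Section Descent.
Variable b : LimObj Q.

Definition chart_spec (i : 'I_n) :=
  constructive_indefinite_description _
    (equiv_ess_surj (theta_equiv i i i) (la b (Miss1 i))).

Definition chart (i : 'I_n) : dobj P (Miss1 i) := proj1_sig (chart_spec i).
Definition chart_iso (i : 'I_n) : hom (tcomp t _ (chart i)) (la b (Miss1 i)) :=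
  proj1_sig (constructive_indefinite_description _ (proj2_sig (chart_spec i))).

Definition chart_at (U : Bn n) (i : 'I_n) (h : val U \subset val (Miss1 i)) :
  hom (tcomp t U (dres P h (chart i))) (la b U) :=
  cmp (lalpha b h) (cmp (fmap (dres Q h) (chart_iso i)) (eq_hom (tnat_obj t h (chart i)))).

Lemma chart_at_heq (U : Bn n) (i : 'I_n) (h : val U \subset val (Miss1 i)) :
  heq (chart_at h) (cmp (lalpha b h) (fmap (dres Q h) (chart_iso i))).
Proof. by apply: heq_cmp; [exact: heq_cmp_eqr|exact: heq_refl]. Qed.

Lemma chart_at_restr (U V : Bn n) (i : 'I_n) (hUV : val U \subset val V)
    (hV : val V \subset val (Miss1 i)) (hU : val U \subset val (Miss1 i)) :
  heq (fmap (dres Q hUV) (chart_at hV)) (cmp (ginv (lalpha b hUV)) (chart_at hU)).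
Proof.
apply: (heq_trans (heq_fmap _ (chart_at_heq hV))); rewrite fmap_comp.
apply: heq_sym; apply: (heq_trans (heq_cmp (heq_trans (chart_at_heq hU)
    (heq_cmp (heq_dres_comp hUV hV hU (chart_iso i)) (heq_lalpha_comp b hUV hV hU)))
  (heq_refl _))).
by rewrite -cmp_assoc cmp_K_inv; exact: heq_refl.
Qed.

Definition transition (i j : 'I_n) :
  hom (dres P (miss2_sub_r i j) (chart j)) (dres P (miss2_sub_l i j) (chart i)) :=
  theta_lift (cmp (ginv (chart_at (miss2_sub_l i j))) (chart_at (miss2_sub_r i j))).

Definition transition_at (U : Bn n) (i j : 'I_n) (hij : val U \subset val (Miss2 i j))
    (hi : val U \subset val (Miss1 i)) (hj : val U \subset val (Miss1 j)) :
  hom (dres P hj (chart j)) (dres P hi (chart i)) :=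
  cmp (eq_hom (esym (dres_comp_obj P hij (miss2_sub_l i j) hi (chart i))))
      (cmp (fmap (dres P hij) (transition i j))
           (eq_hom (dres_comp_obj P hij (miss2_sub_r i j) hj (chart j)))).

Lemma transition_at_heq (U : Bn n) (i j : 'I_n) (hij : val U \subset val (Miss2 i j))
    (hi : val U \subset val (Miss1 i)) (hj : val U \subset val (Miss1 j)) :
  heq (transition_at hij hi hj) (fmap (dres P hij) (transition i j)).
Proof. by apply: heq_trans (heq_cmp_eql _ _) _; exact: heq_cmp_eqr. Qed.

Lemma transition_at_pi (U : Bn n) (i j : 'I_n) (hij hij' : val U \subset val (Miss2 i j))
    (hi hi' : val U \subset val (Miss1 i)) (hj hj' : val U \subset val (Miss1 j)) :
  heq (transition_at hij hi hj) (transition_at hij' hi' hj').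
Proof.
rewrite (eq_irrelevance hij hij') (eq_irrelevance hi hi') (eq_irrelevance hj hj').
exact: heq_refl.
Qed.

Lemma transition_at_theta (U : Bn n) (i j : 'I_n) (hij : val U \subset val (Miss2 i j))
    (hi : val U \subset val (Miss1 i)) (hj : val U \subset val (Miss1 j)) :
  fmap (tcomp t U) (transition_at hij hi hj) = cmp (ginv (chart_at hi)) (chart_at hj).
Proof.
apply: heq_eq; apply: (heq_trans (heq_fmap _ (transition_at_heq hij hi hj))).
apply: (heq_trans (heq_tnat t hij (transition i j))).
rewrite /transition theta_liftE fmap_comp -inv_fmap.
apply: (heq_trans (heq_cmp (chart_at_restr hij (miss2_sub_r i j) hj)
  (heq_inv (chart_at_restr hij (miss2_sub_l i j) hi)))).
by rewrite inv_cmp inv_inv -cmp_assoc cmp_inv_K; exact: heq_refl.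
Qed.

Lemma transition_at_restr (U Z : Bn n) (i j : 'I_n) (hUZ : val U \subset val Z)
    (hZij : val Z \subset val (Miss2 i j)) (hZi : val Z \subset val (Miss1 i))
    (hZj : val Z \subset val (Miss1 j)) (hUij : val U \subset val (Miss2 i j))
    (hUi : val U \subset val (Miss1 i)) (hUj : val U \subset val (Miss1 j)) :
  heq (transition_at hUij hUi hUj) (fmap (dres P hUZ) (transition_at hZij hZi hZj)).
Proof.
apply: (heq_trans (transition_at_heq _ _ _)).
apply: (heq_trans (heq_dres_comp hUZ hZij hUij (transition i j))).
by apply: heq_fmap; apply: heq_sym; exact: transition_at_heq.
Qed.

(** Cocycle identity over the co-triple [n] \ {i,j,k}, where theta is
    faithful ... *)
Lemma cocycle_miss (i j k : 'I_n) (h1 : val (Miss i j k) \subset val (Miss2 i j))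
    (h2 : val (Miss i j k) \subset val (Miss2 j k))
    (h3 : val (Miss i j k) \subset val (Miss2 i k))
    (hi : val (Miss i j k) \subset val (Miss1 i))
    (hj : val (Miss i j k) \subset val (Miss1 j))
    (hk : val (Miss i j k) \subset val (Miss1 k)) :
  cmp (transition_at h1 hi hj) (transition_at h2 hj hk) = transition_at h3 hi hk.
Proof.
apply: (@theta_faithful i j k); rewrite fmap_comp !transition_at_theta.
by rewrite -cmp_assoc cmp_inv_K.
Qed.

(** ... hence, by restriction, over every U avoiding i, j and k. *)
Lemma cocycle (U : Bn n) (i j k : 'I_n) (hij : val U \subset val (Miss2 i j))
    (hjk : val U \subset val (Miss2 j k)) (hik : val U \subset val (Miss2 i k))
    (hi : val U \subset val (Miss1 i)) (hj : val U \subset val (Miss1 j))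
    (hk : val U \subset val (Miss1 k))
    (Hi : i \notin val U) (Hj : j \notin val U) (Hk : k \notin val U) :
  cmp (transition_at hij hi hj) (transition_at hjk hj hk) = transition_at hik hi hk.
Proof.
have hUZ : val U \subset val (Miss i j k) := sub_miss Hi Hj Hk.
have [[Ni Nj] Nk] := (notin_miss1 i j k, notin_miss2 i j k, notin_miss3 i j k).
have hZij : val (Miss i j k) \subset val (Miss2 i j) := sub_miss Ni Nj Nj.
have hZjk : val (Miss i j k) \subset val (Miss2 j k) := sub_miss Nj Nk Nk.
have hZik : val (Miss i j k) \subset val (Miss2 i k) := sub_miss Ni Nk Nk.
have hZi : val (Miss i j k) \subset val (Miss1 i) := sub_miss Ni Ni Ni.
have hZj : val (Miss i j k) \subset val (Miss1 j) := sub_miss Nj Nj Nj.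
have hZk : val (Miss i j k) \subset val (Miss1 k) := sub_miss Nk Nk Nk.
apply: heq_eq; apply: (heq_trans (heq_cmp
  (transition_at_restr hUZ hZjk hZj hZk hjk hj hk)
  (transition_at_restr hUZ hZij hZi hZj hij hi hj))).
rewrite -fmap_comp (cocycle_miss hZij hZjk hZik).
by apply: heq_sym; exact: transition_at_restr.
Qed.

Lemma transition_at_id (U : Bn n) (i : 'I_n) (hii : val U \subset val (Miss2 i i))
    (hi : val U \subset val (Miss1 i)) (Hi : i \notin val U) :
  transition_at hii hi hi = idm _.
Proof.
have H := cocycle hii hii hii hi hi hi Hi Hi Hi.
by rewrite -(cmp_K_inv (transition_at hii hi hi) (transition_at hii hi hi)) H inv_l.
Qed.

Definition glued_comp (U : Bn n) : dobj P U := dres P (sub_outside U) (chart (outside U)).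

Definition sub_outside_r (U X : Bn n) (h : val U \subset val X) :
  val U \subset val (Miss1 (outside X)) := subset_trans h (sub_outside X).

Definition sub_outside2 (U X : Bn n) (h : val U \subset val X) :
  val U \subset val (Miss2 (outside U) (outside X)) :=
  sub_miss (outside_notin U) (outside_notin_sub h) (outside_notin_sub h).

Definition glued_alpha (U X : Bn n) (h : val U \subset val X) :
  hom (dres P h (glued_comp X)) (glued_comp U) :=
  cmp (transition_at (sub_outside2 h) (sub_outside U) (sub_outside_r h))
      (eq_hom (esym (dres_comp_obj P h (sub_outside X) (sub_outside_r h) (chart (outside X))))).

Lemma glued_alpha_heq (U X : Bn n) (h : val U \subset val X) :
  heq (glued_alpha h) (transition_at (sub_outside2 h) (sub_outside U) (sub_outside_r h)).
Proof. exact: heq_cmp_eqr. Qed.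

Lemma glued_alpha_id (U : Bn n) (h : val U \subset val U) :
  glued_alpha h = eq_hom (dres_id_obj P h (glued_comp U)).
Proof.
apply: heq_eq; apply: (heq_trans (glued_alpha_heq h)).
have hii := sub_miss (outside_notin U) (outside_notin U) (outside_notin U).
apply: (heq_trans (transition_at_pi _ hii _ (sub_outside U) _ (sub_outside U))).
by rewrite transition_at_id ?outside_notin //; apply: heq_sym; exact: heq_eq_hom.
Qed.

Lemma glued_alpha_comp (U V X : Bn n) (hUV : val U \subset val V)
    (hVX : val V \subset val X) (hUX : val U \subset val X) :
  glued_alpha hUX = cmp (glued_alpha hUV) (cmp (fmap (dres P hUV) (glued_alpha hVX))
                          (eq_hom (dres_comp_obj P hUV hVX hUX (glued_comp X)))).
Proof.
apply: heq_eq; apply: heq_sym.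
apply: (heq_trans (heq_cmp (heq_cmp_eqr _ _) (heq_refl _))).
have NV := outside_notin_sub hUV; have NX := outside_notin_sub hUX.
apply: (heq_trans (heq_cmp (heq_trans (heq_fmap _ (glued_alpha_heq hVX))
   (heq_sym (transition_at_restr hUV (sub_outside2 hVX) (sub_outside V)
     (sub_outside_r hVX) (sub_miss NV NX NX) (sub_outside_r hUV) (sub_miss NX NX NX))))
   (glued_alpha_heq hUV))).
rewrite (cocycle _ _ (sub_outside2 hUX)) ?outside_notin //.
by apply: (heq_trans _ (heq_sym (glued_alpha_heq hUX))); exact: transition_at_pi.
Qed.

Definition glued : LimObj P := LObj glued_alpha_id glued_alpha_comp.

Lemma chart_at_nat (U X : Bn n) (h : val U \subset val X) :
  cmp (chart_at (sub_outside U)) (lalpha (lim_map_obj t glued) h)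
  = cmp (lalpha b h) (fmap (dres Q h) (chart_at (sub_outside X))).
Proof.
apply: heq_eq.
apply: (heq_trans (heq_cmp (heq_lalpha_map t glued h) (heq_refl _))).
apply: (heq_trans (heq_cmp (heq_fmap _ (glued_alpha_heq h)) (heq_refl _))).
rewrite transition_at_theta cmp_inv_K; apply: heq_sym.
apply: (heq_trans (heq_cmp (chart_at_restr h (sub_outside X) (sub_outside_r h)) (heq_refl _))).
by rewrite cmp_inv_K; exact: heq_refl.
Qed.

Definition glued_counit : LimHom (lim_map_obj t glued) b := LHom chart_at_nat.
End Descent.

Lemma lim_ess_surj (b : LimObj Q) :
  exists (a : LimCat P) (e : @hom (LimCat Q) (lim_functor t a) b), is_iso e.
Proof. by exists (glued b), (glued_counit b); exact: lim_iso. Qed.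

Lemma lg_restr (a b : LimObj P) (g : LimHom a b) (U V : Bn n) (h : val U \subset val V) :
  lg g U = cmp (lalpha b h) (cmp (fmap (dres P h) (lg g V)) (ginv (lalpha a h))).
Proof. by rewrite cmp_assoc -lg_nat -cmp_assoc inv_r cmp_idr. Qed.

Lemma lim_faithful (a b : LimCat P) (g g' : hom a b) :
  fmap (lim_functor t) g = fmap (lim_functor t) g' -> g = g'.
Proof.
move=> H; apply: LimHom_ext => U.
have HU V : fmap (tcomp t V) (lg g V) = fmap (tcomp t V) (lg g' V).
  exact: (congr1 (fun k => lg k V) H).
rewrite (lg_restr g (sub_outside U)) (lg_restr g' (sub_outside U)).
by rewrite (theta_faithful (HU (Miss1 (outside U)))).
Qed.

Section Fullness.
Variables (a b : LimObj P) (h : LimHom (lim_map_obj t a) (lim_map_obj t b)).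

Definition lift_max (i : 'I_n) : hom (la a (Miss1 i)) (la b (Miss1 i)) :=
  theta_lift (lg h (Miss1 i)).

Definition lift_at (U : Bn n) (i : 'I_n) (hi : val U \subset val (Miss1 i)) :
  hom (la a U) (la b U) :=
  cmp (lalpha b hi) (cmp (fmap (dres P hi) (lift_max i)) (ginv (lalpha a hi))).

Lemma lift_at_theta (U : Bn n) (i : 'I_n) (hi : val U \subset val (Miss1 i)) :
  fmap (tcomp t U) (lift_at hi) = lg h U.
Proof.
apply: heq_eq; rewrite /lift_at !fmap_comp -inv_fmap.
apply: (heq_trans (heq_cmp
  (heq_cmp (heq_inv (heq_sym (heq_lalpha_map t a hi))) (heq_tnat t hi (lift_max i)))
  (heq_sym (heq_lalpha_map t b hi)))).
rewrite /lift_max theta_liftE cmp_assoc -(lg_nat h hi) -cmp_assoc inv_r cmp_idr.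
exact: heq_refl.
Qed.

Lemma lift_at_restr (U V : Bn n) (i : 'I_n) (hUV : val U \subset val V)
    (hV : val V \subset val (Miss1 i)) (hU : val U \subset val (Miss1 i)) :
  lift_at hU = cmp (lalpha b hUV) (cmp (fmap (dres P hUV) (lift_at hV)) (ginv (lalpha a hUV))).
Proof.
apply: heq_eq; rewrite /lift_at.
apply: (heq_trans (heq_cmp
  (heq_cmp (heq_inv (heq_lalpha_comp a hUV hV hU)) (heq_dres_comp hUV hV hU (lift_max i)))
  (heq_lalpha_comp b hUV hV hU))).
rewrite inv_cmp inv_fmap !fmap_comp -inv_fmap !cmp_assoc; exact: heq_refl.
Qed.

(** lift_at does not depend on the chosen i outside U: compare over
    [n] \ {i,j}, where theta is faithful. *)
Lemma lift_at_indep (U : Bn n) (i j : 'I_n) (hi : val U \subset val (Miss1 i))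
    (hj : val U \subset val (Miss1 j)) (Hi : i \notin val U) (Hj : j \notin val U) :
  lift_at hi = lift_at hj.
Proof.
have hUij : val U \subset val (Miss2 i j) := sub_miss Hi Hj Hj.
have E : lift_at (miss2_sub_l i j) = lift_at (miss2_sub_r i j).
  by apply: (@theta_faithful i j j); rewrite !lift_at_theta.
by rewrite (lift_at_restr hUij (miss2_sub_l i j) hi) (lift_at_restr hUij (miss2_sub_r i j) hj) E.
Qed.

Lemma lift_at_nat (U X : Bn n) (hUX : val U \subset val X) :
  cmp (lift_at (sub_outside U)) (lalpha a hUX)
  = cmp (lalpha b hUX) (fmap (dres P hUX) (lift_at (sub_outside X))).
Proof.
rewrite (lift_at_indep (sub_outside U) (sub_outside_r hUX)) ?outside_notin
  ?outside_notin_sub // (lift_at_restr hUX (sub_outside X) (sub_outside_r hUX)).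
by rewrite -!cmp_assoc inv_l cmp_idr.
Qed.

Definition lifted : LimHom a b := LHom lift_at_nat.

Lemma liftedE : lim_map_hom t lifted = h.
Proof. by apply: LimHom_ext => U /=; exact: lift_at_theta. Qed.
End Fullness.

Lemma lim_full (a b : LimCat P) (h : hom (lim_functor t a) (lim_functor t b)) :
  exists g : hom a b, fmap (lim_functor t) g = h.
Proof. by exists (lifted h); exact: liftedE. Qed.

Lemma lim_equiv_of_miss : IsEquivalence (lim_functor t).
Proof. exact: ffe_equiv lim_faithful lim_full lim_ess_surj. Qed.
End Main.

Unset Implicit Arguments.

Theorem corollary5p3 (n : nat) (Hn : 3 <= n) (P Q : Diagram n) (theta : Trans P Q)
  (Htheta : forall S : Bn n, n - 3 <= #|val S| <= n - 1 ->
              IsEquivalence (tcomp theta S)) :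
  IsEquivalence (lim_functor theta).
Proof.
have i0 : 'I_n := Ordinal (leq_trans (isT : 0 < 3) Hn).
apply: (lim_equiv_of_miss i0) => i j k.
exact: Htheta (card_miss i j k).
Qed.
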